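(* Let $B$ be a lattice and $p\colon X\to B$ a presheaf of sets over $B$ with global support. Suppose that $x,y\in X$ satisfy $x\sim y$ and that the join $x\vee y$ exists in $(X,\le)$. Then $p(x\vee y)=p(x)\vee p(y)$.
   Context: Presheaf of sets over a meet semilattice $E$: for each $e\in E$ a set $X_e$, pairwise disjoint, and for $e\ge f$ a restriction map $x\mapsto x|^e_f$ from $X_e$ to $X_f$ with $|^e_e=\mathrm{id}$ and $(x|^e_f)|^f_g=x|^e_g$ for $e\ge f\ge g$; $X=\bigcup X_e$ and $p(x)=e$ iff $x\in X_e$. Global support: all $X_e$ non-empty. Partial order on $X$: $x\le y$ iff $p(x)\le p(y)$ and $x=y|^{p(y)}_{p(x)}$. Compatibility: $x\sim y$ iff the meet $x\wedge y$ exists in $(X,\le)$ and $p(x\wedge y)=p(x)\wedge p(y)$. *)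

From HB Require Import structures.
From mathcomp Require Import all_boot all_order.
Set Implicit Arguments. Unset Strict Implicit. Unset Printing Implicit Defensive.
Import Order.TTheory.
Local Open Scope order_scope.

(* The disjoint family (X_e)_e is encoded as a single carrier type X together
   with the projection p : X -> E (x ∈ X_e iff p x = e).  The restriction maps
   x |-> x|^e_f (for e >= f, x ∈ X_e) are encoded by a single function
   res : X -> E -> X, where res x f stands for x|^{p x}_f; its values for
   ~ (f <= p x) are irrelevant and unconstrained. *)
Record is_presheaf {d : Order.disp_t} {E : meetSemilatticeType d} {X : Type}
    (p : X -> E) (res : X -> E -> X) : Prop := {
  res_proj : forall x f, f <= p x -> p (res x f) = f;
  res_id : forall x, res x (p x) = x;
  res_comp : forall x f g, g <= f -> f <= p x -> res (res x f) g = res x g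
}.

Definition global_support {d : Order.disp_t} {E : meetSemilatticeType d}
    {X : Type} (p : X -> E) : Prop :=
  forall e : E, exists x : X, p x = e.

Definition psh_le {d : Order.disp_t} {E : meetSemilatticeType d} {X : Type}
    (p : X -> E) (res : X -> E -> X) (x y : X) : Prop :=
  p x <= p y /\ x = res y (p x).

Definition psh_is_meet {d : Order.disp_t} {E : meetSemilatticeType d} {X : Type}
    (p : X -> E) (res : X -> E -> X) (x y m : X) : Prop :=
  psh_le p res m x /\ psh_le p res m y /\
  forall z, psh_le p res z x -> psh_le p res z y -> psh_le p res z m.

Definition psh_is_join {d : Order.disp_t} {E : meetSemilatticeType d} {X : Type}
    (p : X -> E) (res : X -> E -> X) (x y j : X) : Prop :=
  psh_le p res x j /\ psh_le p res y j /\
  forall z, psh_le p res x z -> psh_le p res y z -> psh_le p res j z.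

Definition psh_compat {d : Order.disp_t} {E : meetSemilatticeType d} {X : Type}
    (p : X -> E) (res : X -> E -> X) (x y : X) : Prop :=
  exists m, psh_is_meet p res x y m /\ p m = p x `&` p y.

From HB Require Import structures.
From mathcomp Require Import all_boot all_order.
Import Order.TTheory.
Local Open Scope order_scope.

(* Restricting the join j to p x `|` p y gives another upper bound of x and y,
   lying below j; minimality of j forces p j <= p x `|` p y. *)

Lemma psh_le_res (d : Order.disp_t) (E : meetSemilatticeType d) (X : Type)
    (p : X -> E) (res : X -> E -> X) (x y : X) (f : E) :
  is_presheaf p res ->
  psh_le p res x y -> p x <= f -> f <= p y -> psh_le p res x (res y f).
Proof.
case=> res_proj _ res_comp [_ ex] xf fy.
by split; rewrite ?res_proj ?res_comp.
Qed.

Lemma psh_join_proj (d : Order.disp_t) (B : latticeType d) (X : Type)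
    (p : X -> B) (res : X -> B -> X) (x y j : X) :
  is_presheaf p res -> psh_is_join p res x y j -> p j = p x `|` p y.
Proof.
move=> presheaf [x_le_j [y_le_j j_least]].
have xy_le_j : p x `|` p y <= p j by rewrite leUx x_le_j.1 y_le_j.1.
have [j_le _] : psh_le p res j (res j (p x `|` p y)).
  by apply: j_least; apply: psh_le_res; rewrite ?leUl ?leUr.
apply/eqP; rewrite eq_le xy_le_j andbT.
by case: presheaf j_le => res_proj _ _; rewrite res_proj.
Qed.

Theorem lemma1p7 (d : Order.disp_t) (B : latticeType d) (X : Type)
    (p : X -> B) (res : X -> B -> X)
    (hP : is_presheaf p res) (hG : global_support p)
    (x y : X) (hxy : psh_compat p res x y)
    (j : X) (hj : psh_is_join p res x y j) :
  p j = p x `|` p y.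
Proof. exact: psh_join_proj hP hj. Qed.
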